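(* Each of the following families of graphs is feasible, i.e. for every integer $n \ge 1$ and every integer $m$ with $0 \le m \le \binom{n}{2}$ the family contains a graph with $n$ vertices and $m$ edges: (1) induced $K_{1,r}$-free graphs, for any fixed $r\geq 3$, where $K_{1,r}$ is the star with $r$ leaves; (2) induced $P_r$-free graphs, for any fixed $r \geq 3$, where $P_r$ is the path with $r$ edges; (3) induced $rK_2$-free graphs, for any fixed $r \geq 2$, where $rK_2$ is the disjoint union of $r$ edges; (4) chordal graphs.
   Context: All graphs are finite and simple. A graph is induced $H$-free if it has no induced subgraph isomorphic to $H$. A graph is chordal if every cycle of length at least 4 has a chord. *)

From mathcomp Require Import all_boot.
Set Implicit Arguments. Unset Strict Implicit. Unset Printing Implicit Defensive.

Definition simple_graph (T : finType) (e : rel T) : Prop :=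
  symmetric e /\ irreflexive e.

Definition edge_set (T : finType) (e : rel T) : {set {set T}} :=
  [set A : {set T} | (#|A| == 2) && [forall x in A, forall y in A, (x != y) ==> e x y]].

Definition num_edges (T : finType) (e : rel T) : nat := #|edge_set e|.

Definition has_induced (U : finType) (h : rel U) (T : finType) (e : rel T) : Prop :=
  exists f : U -> T, injective f /\ forall u v, e (f u) (f v) = h u v.

Definition induced_free (U : finType) (h : rel U) (T : finType) (e : rel T) : Prop :=
  ~ has_induced h e.

Definition star_rel (r : nat) : rel 'I_r.+1 :=
  fun i j => (i != j) && ((nat_of_ord i == 0) || (nat_of_ord j == 0)).

Definition path_rel (r : nat) : rel 'I_r.+1 :=
  fun i j => ((nat_of_ord i).+1 == j) || ((nat_of_ord j).+1 == i).

(* rK_2: vertices 0..2r-1, edges {2k, 2k+1}. *)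
Definition matching_rel (r : nat) : rel 'I_(r.*2) :=
  fun i j => (i != j) && ((nat_of_ord i)./2 == (nat_of_ord j)./2).

(* A cycle is a
   duplicate-free sequence s with e between cyclically consecutive vertices;
   a chord is an edge between two vertices of s not consecutive on the cycle. *)
Definition chordal (T : finType) (e : rel T) : Prop :=
  forall s : seq T, uniq s -> 4 <= size s -> cycle e s ->
    exists x y, [/\ x \in s, y \in s, x != y, e x y &
                    (next s x != y) && (next s y != x)].

Definition graph_family := forall T : finType, rel T -> Prop.

Definition feasible (F : graph_family) : Prop :=
  forall n m : nat, 1 <= n -> m <= 'C(n, 2) ->
    exists e : rel 'I_n, simple_graph e /\ num_edges e = m /\ F _ e.

From mathcomp Require Import all_boot zify.

Set Implicit Arguments.
Unset Strict Implicit.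
Unset Printing Implicit Defensive.

(* A single graph works for all four families.  Order the pairs i < j of
   vertices colexicographically, i.e. by the rank C(j,2) + i, which enumerates
   them bijectively by 0, 1, ..., and let the edges be the m pairs of smallest
   rank.  An edge at a vertex x has rank >= C(x,2), while every pair of
   vertices below x has rank < C(x,2); so if the largest vertex of a vertex
   set has a neighbour in it, all other vertices of the set are pairwise
   adjacent.  Each of K_{1,r}, P_r, rK_2 has no isolated vertex and keeps a
   non-edge after deleting any vertex, so it cannot be induced.  On a cycle of
   length >= 4 through its top vertex p, the successor of p and the vertex two
   steps further lie below p and are not consecutive, so they span a chord. *)

Definition colex_rank (i j : nat) : nat := 'C(maxn i j, 2) + minn i j.

Definition colex_graph {n : nat} (m : nat) : rel 'I_n :=
  fun i j => (i != j) && (colex_rank i j < m).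

Lemma colex_rankC i j : colex_rank i j = colex_rank j i.
Proof. by rewrite /colex_rank maxnC minnC. Qed.

Lemma colex_rank_lt_bin i j x : i != j -> i < x -> j < x -> colex_rank i j < 'C(x, 2).
Proof.
move=> ij ix jx; have lt_ij : minn i j < maxn i j by lia.
apply: (@leq_trans 'C((maxn i j).+1, 2)); first by rewrite binS bin1 /colex_rank; lia.
apply: leq_bin2l; lia.
Qed.

Lemma colex_graph_simple n m : simple_graph (@colex_graph n m).
Proof.
split=> [i j | i]; last by rewrite /colex_graph eqxx.
by rewrite /colex_graph eq_sym colex_rankC.
Qed.

Lemma colex_graph_clique_below n m (x y z w : 'I_n) :
  colex_graph m x y -> z < x -> w < x -> z != w -> colex_graph m z w.
Proof.
case/andP=> _ xy_m zx wx zw; rewrite /colex_graph zw /=.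
have := @colex_rank_lt_bin z w x zw zx wx; move: xy_m; rewrite /colex_rank.
have : 'C(x, 2) <= 'C(maxn x y, 2) by apply: leq_bin2l; exact: leq_maxl.
lia.
Qed.

Lemma num_edges_ord n (e : rel 'I_n) : symmetric e ->
  num_edges e = #|[set p : 'I_n * 'I_n | (p.2 < p.1) && e p.1 p.2]|.
Proof.
move=> e_sym; rewrite /num_edges; set P := [set p | _].
have -> : edge_set e = [set [set p.1; p.2] | p in P].
  apply/setP => A; rewrite inE; apply/idP/imsetP.
  - case/andP => /cards2P [x [y [xy ->]]] /forall_inP/(_ x (set21 _ _))
      /forall_inP/(_ y (set22 _ _)); rewrite xy /= => exy.
    have [lt_xy|lt_yx|eq_xy] := ltngtP x y; last by rewrite (val_inj eq_xy) eqxx in xy.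
    + by exists (y, x); rewrite ?inE /= ?lt_xy 1?e_sym // setUC.
    + by exists (x, y); rewrite ?inE /= ?lt_yx.
  - case=> [[a b]]; rewrite inE /= => /andP[lt_ba eab] ->.
    have ab : a != b by rewrite neq_ltn lt_ba orbT.
    rewrite cards2 ab /=; apply/forall_inP => x /set2P hx; apply/forall_inP => y /set2P hy.
    by case: hx hy => -> [] ->; rewrite ?eqxx ?eab ?implybT // e_sym eab implybT.
rewrite card_in_imset // => -[a b] [c d]; rewrite !inE /= => /andP[lt_ba _] /andP[lt_dc _] E.
have /set2P ha : a \in [set c; d] by rewrite -E set21.
have /set2P hb : b \in [set c; d] by rewrite -E set22.
case: ha hb lt_ba lt_dc => -> [] ->; rewrite ?ltnn //; lia.
Qed.

Lemma sum_minn_bin n m : \sum_(j < n) minn j (m - 'C(j, 2)) = minn m 'C(n, 2).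
Proof.
elim: n => [|n IHn]; first by rewrite big_ord0 bin0n minn0.
by rewrite big_ord_recr /= IHn binS bin1; lia.
Qed.

Lemma card_colex_below n m (j : 'I_n) :
  #|[set i : 'I_n | (i < j) && ('C(j, 2) + i < m)]| = minn j (m - 'C(j, 2)).
Proof.
set k := minn j _; have le_k_n : k <= n by have := ltn_ord j; lia.
rewrite -sum1_card -[RHS]card_ord -sum1_card (big_ord_widen n (fun=> 1) le_k_n).
by apply: eq_bigl => i; rewrite inE; lia.
Qed.

Lemma colex_graph_num_edges n m : m <= 'C(n, 2) -> num_edges (@colex_graph n m) = m.
Proof.
move=> le_m_n; rewrite num_edges_ord; last exact: (colex_graph_simple n m).1.
have colex_pair (j i : 'I_n) :
    (i < j) && colex_graph m j i = (i < j) && ('C(j, 2) + i < m).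
  rewrite /colex_graph /colex_rank; case: (ltngtP i j) => //= lt_ij.
  by rewrite neq_ltn lt_ij orbT /=; lia.
pose below_top (j i : 'I_n) := (i < j) && ('C(j, 2) + i < m).
rewrite -sum1_card (eq_bigl (fun p => true && below_top p.1 p.2)); last first.
  by move=> p; rewrite inE colex_pair.
rewrite -(pair_big_dep xpredT below_top (fun _ _ => 1)) /=.
under eq_bigr => j _ do rewrite sum1dep_card card_colex_below.
by rewrite sum_minn_bin; lia.
Qed.

Lemma exists_top_vertex (U : finType) n (f : U -> 'I_n) (u0 : U) :
  injective f -> exists u, forall w, w != u -> f w < f u.
Proof.
move=> f_inj; have [u _ u_max] := @arg_maxnP U u0 xpredT (fun u => val (f u)) isT.
exists u => w wu; have le_wu : f w <= f u := u_max w isT.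
rewrite ltn_neqAle le_wu andbT.
by apply: contra wu => /eqP/val_inj/f_inj ->.
Qed.

Lemma colex_graph_induced_free (U : finType) (h : rel U) n m (u0 : U) :
  (forall u, exists v, h u v) ->
  (forall u, exists w1 w2, [/\ w1 != u, w2 != u, w1 != w2 & ~~ h w1 w2]) ->
  induced_free h (@colex_graph n m).
Proof.
move=> h_nonisolated h_noncomplete [f [f_inj f_induced]].
have [u u_top] := exists_top_vertex u0 f_inj.
have [v huv] := h_nonisolated u.
have [w1 [w2 [w1u w2u w12 nh12]]] := h_noncomplete u.
have : colex_graph m (f w1) (f w2).
  apply: (@colex_graph_clique_below _ _ (f u) (f v)); rewrite ?f_induced ?u_top //.
  by apply: contra w12 => /eqP/f_inj ->.
by rewrite f_induced (negbTE nh12).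
Qed.

Ltac ord_lia := rewrite -?val_eqE /= ?inordK; repeat split; lia.

Lemma colex_graph_star_free r n m :
  3 <= r -> induced_free (@star_rel r) (@colex_graph n m).
Proof.
move=> le3r; apply: (colex_graph_induced_free ord0) => u; rewrite /star_rel.
- by have [u0|u_neq0] := eqVneq (u : nat) 0; [exists (inord 1) | exists ord0]; ord_lia.
- have [u1|u_neq1] := eqVneq (u : nat) 1; first by exists (inord 2), (inord 3); ord_lia.
  by exists (inord 1), (inord (if u == 2 :> nat then 3 else 2)); case: ifP; ord_lia.
Qed.

Lemma colex_graph_path_free r n m :
  3 <= r -> induced_free (@path_rel r) (@colex_graph n m).
Proof.
move=> le3r; apply: (colex_graph_induced_free ord0) => u; rewrite /path_rel.
- have [ur|u_neqr] := eqVneq (u : nat) r; first by exists (inord r.-1); ord_lia.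
  by have lt_u_r := ltn_ord u; exists (inord u.+1); ord_lia.
- have [u0|u_neq0] := eqVneq (u : nat) 0; first by exists (inord 1), (inord 3); ord_lia.
  by exists (inord 0), (inord (if u == 3 :> nat then 2 else 3)); case: ifP; ord_lia.
Qed.

Lemma colex_graph_matching_free r n m :
  2 <= r -> induced_free (@matching_rel r) (@colex_graph n m).
Proof.
move=> le2r; have lt_0_2r : 0 < r.*2 by lia.
apply: (colex_graph_induced_free (Ordinal lt_0_2r)) => u; rewrite /matching_rel.
- have lt_u_2r := ltn_ord u; have u_halves := odd_double_half u.
  pose partner := if odd u then u.-1 else u.+1.
  have lt_partner : partner < r.*2 by rewrite /partner; case: (odd u) u_halves => /=; lia.
  by exists (Ordinal lt_partner); rewrite -val_eqE /partner /=; case: (odd u) u_halves => /=; lia.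
- have lt_1 : 1 < r.*2 by lia. have lt_2 : 2 < r.*2 by lia. have lt_3 : 3 < r.*2 by lia.
  have [u0|u_neq0] := eqVneq (u : nat) 0; first by exists (Ordinal lt_1), (Ordinal lt_2); ord_lia.
  have [u2|u_neq2] := eqVneq (u : nat) 2; first by exists (Ordinal lt_0_2r), (Ordinal lt_3); ord_lia.
  by exists (Ordinal lt_0_2r), (Ordinal lt_2); ord_lia.
Qed.

Lemma next_second_fourth (T : eqType) (x a b c : T) (s : seq T) :
  uniq [:: x, a, b, c & s] ->
  (next [:: x, a, b, c & s] a != c) && (next [:: x, a, b, c & s] c != a).
Proof.
rewrite /= !inE !negb_or => /and4P[/and4P[xa _ xc _] /and3P[_ ac a_s] /andP[bc _] _].
rewrite /next /= eqxx ![a == _]eq_sym ![c == _]eq_sym.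
rewrite (negbTE xa) (negbTE xc) (negbTE ac) (negbTE bc) /=.
by case: s a_s => [|d s] /=; rewrite eqxx // inE negb_or eq_sym => /andP[].
Qed.

Lemma colex_graph_chordal n m : chordal (@colex_graph n m).
Proof.
case=> [//|x0 s0] s_uniq s_size s_cycle; set s := x0 :: s0 in s_uniq s_size s_cycle *.
have [p p_in p_max] := @arg_maxnP _ x0 (mem s) (fun x => val x) (mem_head _ _).
have [i t s_rot] := rot_to p_in.
have t_uniq : uniq (p :: t) by rewrite -s_rot rot_uniq.
have t_cycle : cycle (colex_graph m) (p :: t) by rewrite -s_rot rot_cycle.
have t_size : 4 <= size (p :: t) by rewrite -s_rot size_rot.
have t_mem z : z \in p :: t -> z \in s by rewrite -s_rot mem_rot.
have below_p z : z \in p :: t -> p != z -> z < p.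
  move=> /t_mem z_in pz; have le_zp : z <= p := p_max z z_in.
  by rewrite ltn_neqAle le_zp andbT; apply: contra pz => /eqP/val_inj ->.
case: t s_rot t_uniq t_cycle t_size t_mem below_p => [|a [|b [|c t]]] //
  s_rot t_uniq t_cycle _ t_mem below_p.
have [pa pc ac] : [/\ p != a, p != c & a != c].
  by move: t_uniq; rewrite /= !inE !negb_or => /and5P[/and4P[-> _ -> _] /and3P[_ -> _] _ _ _].
exists a, c; split; rewrite ?t_mem ?inE ?eqxx ?orbT //.
- apply: (@colex_graph_clique_below _ _ p a); rewrite ?below_p ?inE ?eqxx ?orbT //.
  by case/andP: t_cycle.
- by rewrite -(next_rot i s_uniq) -(next_rot i s_uniq) s_rot next_second_fourth.
Qed.

Lemma colex_feasible (F : graph_family) :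
  (forall n m, F _ (@colex_graph n m)) -> feasible F.
Proof.
move=> F_colex n m _ le_m_n; exists (@colex_graph n m).
by split; [exact: colex_graph_simple | split; [exact: colex_graph_num_edges | exact: F_colex]].
Qed.

Theorem mainTheorem4 :
  (forall r : nat, 3 <= r -> feasible (fun T e => induced_free (@star_rel r) e)) /\
  (forall r : nat, 3 <= r -> feasible (fun T e => induced_free (@path_rel r) e)) /\
  (forall r : nat, 2 <= r -> feasible (fun T e => induced_free (@matching_rel r) e)) /\
  feasible chordal.
Proof.
split; [|split; [|split]]; try move=> r le_r; apply: colex_feasible => n m.
- exact: colex_graph_star_free.
- exact: colex_graph_path_free.
- exact: colex_graph_matching_free.
- exact: colex_graph_chordal.
Qed.
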